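(* Let $\alpha\in\mathbb R$, $\kappa\in\mathbb N\cup\{\infty\}$, and $(s_j)_{j=0}^\kappa\in\mathcal K^{\ge,e}_{q,\kappa,\alpha}$. (a) For each $n\in\mathbb N_0$ with $2n+1\le\kappa$: $T_{q,n}^*(\mathcal D_n)\subseteq\mathcal D_{\alpha\triangleright n}\subseteq\mathcal D_n$, and $\mathcal N(H_n)\dotplus\mathcal D_n=\mathbb C^{(n+1)q}$, $\mathcal N(H_{\alpha\triangleright n})\dotplus\mathcal D_{\alpha\triangleright n}=\mathbb C^{(n+1)q}$. (b) For each $n\in\mathbb N$ with $2n\le\kappa$: $\mathfrak V_{q,n}^*(\mathcal D_n)\subseteq\mathcal D_{\alpha\triangleright(n-1)}$, $V_{q,n}(\mathcal D_{\alpha\triangleright(n-1)})\subseteq\mathcal D_n$, and $\mathcal N(H_n)\dotplus\mathcal D_n=\mathbb C^{(n+1)q}$, $\mathcal N(H_{\alpha\triangleright(n-1)})\dotplus\mathcal D_{\alpha\triangleright(n-1)}=\mathbb C^{nq}$.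
   Context: $\dotplus$ denotes a direct (not necessarily orthogonal) sum. $H_n:=[s_{j+k}]_{j,k=0}^n$, $s_{\alpha\triangleright j}:=-\alpha s_j+s_{j+1}$, $H_{\alpha\triangleright n}:=[s_{\alpha\triangleright(j+k)}]_{j,k=0}^n$. Classes: $\mathcal K^{\ge}_{q,0,\alpha}$: $s_0$ positive semidefinite; $\mathcal K^{\ge}_{q,2n,\alpha}$ ($n\ge1$): $(s_j)_{j=0}^{2n}$ with $H_n$ and $H_{\alpha\triangleright(n-1)}$ positive semidefinite; $\mathcal K^{\ge}_{q,2n+1,\alpha}$: $(s_j)_{j=0}^{2n+1}$ with $H_n$ and $H_{\alpha\triangleright n}$ positive semidefinite. For finite $m$, $\mathcal K^{\ge,e}_{q,m,\alpha}$: $(s_j)_{j=0}^m$ admitting $s_{m+1}$ with $(s_j)_{j=0}^{m+1}\in\mathcal K^{\ge}_{q,m+1,\alpha}$; $\mathcal K^{\ge,e}_{q,\infty,\alpha}$: $(s_j)_{j=0}^\infty$ with $(s_j)_{j=0}^m\in\mathcal K^{\ge}_{q,m,\alpha}$ for all $m$. Schur complements: $L_0:=s_0$, $L_j:=s_{2j}-\operatorname{row}(s_i)_{i=j}^{2j-1}H_{j-1}^\dagger\operatorname{col}(s_i)_{i=j}^{2j-1}$; $L_{\alpha\triangleright0}:=s_{\alpha\triangleright0}$, $L_{\alpha\triangleright j}:=s_{\alpha\triangleright2j}-\operatorname{row}(s_{\alpha\triangleright i})_{i=j}^{2j-1}H_{\alpha\triangleright(j-1)}^\dagger\operatorname{col}(s_{\alpha\triangleright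 i})_{i=j}^{2j-1}$ ($\dagger$ Moore–Penrose inverse). $\mathcal D_n:=\mathcal R(\operatorname{diag}(L_0,\dots,L_n))$, $\mathcal D_{\alpha\triangleright n}:=\mathcal R(\operatorname{diag}(L_{\alpha\triangleright0},\dots,L_{\alpha\triangleright n}))$. $T_{q,n}:=[\delta_{j,k+1}I_q]_{j,k=0}^n$, $V_{q,n}:=[\delta_{j,k}I_q]_{j=0,\dots,n;k=0,\dots,n-1}$, $\mathfrak V_{q,n}:=[\delta_{j,k+1}I_q]_{j=0,\dots,n;k=0,\dots,n-1}$. *)

From Stdlib Require Import ClassicalEpsilon.
From HB Require Import structures.
From mathcomp Require Import all_boot all_order all_algebra.
Set Implicit Arguments.
Unset Strict Implicit.
Unset Printing Implicit Defensive.
Import Order.TTheory GRing.Theory Num.Theory.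
Local Open Scope ring_scope.

Section Defs.
Variable C : numClosedFieldType.

Definition bs (q n : nat) : nat := (\sum_(i < n) q)%N.

Definition ctr m n (A : 'M[C]_(m, n)) : 'M[C]_(n, m) := (map_mx Num.conj A)^T.

Definition psd n (A : 'M[C]_n) : Prop :=
  ctr A = A /\ forall x : 'cV[C]_n, 0 <= (ctr x *m A *m x) 0 0.

Definition penrose m n (A : 'M[C]_(m, n)) (X : 'M[C]_(n, m)) : Prop :=
  [/\ A *m X *m A = A, X *m A *m X = X,
      ctr (A *m X) = A *m X & ctr (X *m A) = X *m A].
Definition mpinv m n (A : 'M[C]_(m, n)) : 'M[C]_(n, m) :=
  epsilon (inhabits 0) (penrose A).

Definition sshift q (alpha : C) (s : nat -> 'M[C]_q) : nat -> 'M[C]_q :=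
  fun j => - alpha *: s j + s j.+1.

Definition Hank q (s : nat -> 'M[C]_q) n : 'M[C]_(bs q n.+1) :=
  @mxblock C n.+1 n.+1 (fun _ => q) (fun _ => q)
    (fun j k => s (j + k)%N).

Definition Kge q (alpha : C) (s : nat -> 'M[C]_q) (m : nat) : Prop :=
  if m is 0 then psd (s 0%N)
  else if odd m then psd (Hank s m./2) /\ psd (Hank (sshift alpha s) m./2)
  else psd (Hank s m./2) /\ psd (Hank (sshift alpha s) (m./2).-1).

(* kappa in N u {infinity}: None stands for infinity *)
Definition le_kappa (k : nat) (kappa : option nat) : Prop :=
  if kappa is Some K then (k <= K)%N else True.

(* the classes K^{>=,e}_{q,kappa,alpha}; only s_0,...,s_kappa are relevant *)
Definition Kge_e q (alpha : C) (kappa : option nat) (s : nat -> 'M[C]_q) : Prop :=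
  match kappa with
  | Some m => exists t : 'M[C]_q,
      Kge alpha (fun j => if j == m.+1 then t else s j) m.+1
  | None => forall m, Kge alpha s m
  end.

Definition Lschur q (s : nat -> 'M[C]_q) (j : nat) : 'M[C]_q :=
  match j with
  | 0 => s 0%N
  | j'.+1 =>
      s (j'.+1).*2 -
      (mxrow (fun i : 'I_j'.+1 => s (j'.+1 + i)%N : 'M[C]_(q, q)))
        *m mpinv (Hank s j')
        *m (mxcol (fun i : 'I_j'.+1 => s (j'.+1 + i)%N : 'M[C]_(q, q)))
  end.

Definition Ldiag q (s : nat -> 'M[C]_q) n : 'M[C]_(bs q n.+1) :=
  @mxdiag C n.+1 (fun _ => q) (fun j => Lschur s j).

(* Subspaces of C^N are encoded (mxalgebra style) as row spaces of matrices
   whose rows are the transposes of the column vectors of the subspace. *)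
Definition rangesp m n (A : 'M[C]_(m, n)) : 'M[C]_(n, m) := A^T.
Definition nullsp m n (A : 'M[C]_(m, n)) : 'M[C]_n := kermx A^T.
Definition imgsp a b k (M : 'M[C]_(a, b)) (S : 'M[C]_(k, b)) : 'M[C]_(k, a) :=
  S *m M^T.
Definition dsum_full N k l (U : 'M[C]_(k, N)) (W : 'M[C]_(l, N)) : Prop :=
  (U :&: W <= (0 : 'M[C]_N))%MS /\ (1%:M <= U + W)%MS.

Definition Dsp q (s : nat -> 'M[C]_q) n : 'M[C]_(bs q n.+1) := rangesp (Ldiag s n).

Definition Tmx q n : 'M[C]_(bs q n.+1) :=
  @mxblock C n.+1 n.+1 (fun _ => q) (fun _ => q)
    (fun j k => if val j == (val k).+1 then 1%:M else 0).
Definition Vmx q n : 'M[C]_(bs q n.+1, bs q n) :=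
  @mxblock C n.+1 n (fun _ => q) (fun _ => q)
    (fun j k => if val j == val k then 1%:M else 0).
Definition fVmx q n : 'M[C]_(bs q n.+1, bs q n) :=
  @mxblock C n.+1 n (fun _ => q) (fun _ => q)
    (fun j k => if val j == (val k).+1 then 1%:M else 0).

End Defs.

From HB Require Import structures.
From mathcomp Require Import all_boot all_order all_algebra.
From mathcomp Require Import ring zify.
From Stdlib Require Import ClassicalEpsilon.
Import Order.TTheory GRing.Theory Num.Theory.
Local Open Scope ring_scope.
Set Implicit Arguments.
Unset Strict Implicit.
Unset Printing Implicit Defensive.

(* Let [H_N] be a positive semidefinite block Hankel matrix and [j <= N].
   The kernel of the Schur complement [L_j] is exactly the set of last blocks
   of kernel vectors of [H_j], and a kernel vector of [H_j] padded by zeros is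
   a kernel vector of [H_N].  Hence, for [j < N], a kernel vector [f] of [H_j]
   is also one of [H_(alpha > j)], while for a kernel vector [f] of
   [H_(alpha > j)] the sequence [(f_(b-1) - alpha f_b)_b] is a kernel vector
   of [H_(j+1)] with the same last block.  This gives
   [N(L_j) <= N(L_(alpha > j)) <= N(L_(j+1))], and since all the [L_j] are
   Hermitian, the range inclusions follow by taking orthogonal complements.
   The direct sum [N(H_n) + D_n] is built by induction on [n] from
   [C^q = N(L_n) + R(L_n)] and the same description of [N(L_n)].  Only
   [s_0, ..., s_kappa] are involved, so for finite [kappa] we may replace [s]
   by an extension lying in [K^>=_(q,kappa+1,alpha)]. *)

Section ConjTranspose.
Variable C : numClosedFieldType.

Lemma ctrK m n (A : 'M[C]_(m, n)) : ctr (ctr A) = A.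
Proof. by apply/matrixP => i j; rewrite !mxE conjCK. Qed.

Lemma ctrM m n p (A : 'M[C]_(m, n)) (B : 'M[C]_(n, p)) :
  ctr (A *m B) = ctr B *m ctr A.
Proof. by rewrite /ctr map_mxM trmx_mul. Qed.

Lemma ctrD m n (A B : 'M[C]_(m, n)) : ctr (A + B) = ctr A + ctr B.
Proof. by rewrite /ctr map_mxD linearD. Qed.

Lemma ctrN m n (A : 'M[C]_(m, n)) : ctr (- A) = - ctr A.
Proof. by rewrite /ctr map_mxN linearN. Qed.

Lemma ctrB m n (A B : 'M[C]_(m, n)) : ctr (A - B) = ctr A - ctr B.
Proof. by rewrite ctrD ctrN. Qed.

Lemma ctr0 m n : ctr (0 : 'M[C]_(m, n)) = 0.
Proof. by apply/matrixP => i j; rewrite !mxE conjC0. Qed.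

Lemma ctr1 n : ctr (1%:M : 'M[C]_n) = 1%:M.
Proof. by rewrite /ctr map_mx1 trmx1. Qed.

Lemma ctrZ m n a (A : 'M[C]_(m, n)) : ctr (a *: A) = a^* *: ctr A.
Proof. by apply/matrixP => i j; rewrite !mxE rmorphM. Qed.

Lemma ctr_inv n (A : 'M[C]_n) : ctr (invmx A) = invmx (ctr A).
Proof. by rewrite /ctr map_invmx trmx_inv. Qed.

Lemma mxrank_ctr m n (A : 'M[C]_(m, n)) : \rank (ctr A) = \rank A.
Proof. by rewrite /ctr mxrank_tr mxrank_map. Qed.

Lemma ctr_mxcol p (p_ : 'I_p -> nat) n (B : forall i, 'M[C]_(p_ i, n)) :
  ctr (mxcol B) = mxrow (fun i => ctr (B i)).
Proof. by apply/matrixP => i j; rewrite !mxE. Qed.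

Lemma ctr_mxblock p r (p_ : 'I_p -> nat) (r_ : 'I_r -> nat)
   (B : forall i j, 'M[C]_(p_ i, r_ j)) :
  ctr (mxblock B) = mxblock (fun i j => ctr (B j i)).
Proof. by apply/matrixP => i j; rewrite !mxE. Qed.

Lemma ctr_mxdiag p (p_ : 'I_p -> nat) (B : forall i, 'M[C]_(p_ i)) :
  ctr (mxdiag B) = mxdiag (fun i => ctr (B i)).
Proof.
rewrite /mxdiag ctr_mxblock; apply/eq_mxblock => i j.
rewrite eq_sym; case: eqVneq => [->|]; last by rewrite ctr0.
by rewrite !conform_mx_id.
Qed.

End ConjTranspose.

Section Positivity.
Variable C : numClosedFieldType.

Lemma ctr_mul_self_ge0 n (x : 'cV[C]_n) : 0 <= (ctr x *m x) 0 0.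
Proof.
rewrite !mxE; apply: sumr_ge0 => i _; rewrite !mxE mulrC; exact: mul_conjC_ge0.
Qed.

Lemma ctr_mul_self_eq0 n (x : 'cV[C]_n) : (ctr x *m x) 0 0 = 0 -> x = 0.
Proof.
rewrite !mxE => /eqP; rewrite psumr_eq0 => [/allP x0|i _]; last first.
  by rewrite !mxE mulrC; exact: mul_conjC_ge0.
apply/matrixP => i j; rewrite ord1 mxE.
have /implyP/(_ isT) := x0 i (mem_index_enum _).
by rewrite !mxE mulrC mul_conjC_eq0 => /eqP.
Qed.

Lemma mul_ctr_self_eq0 n (w : 'rV[C]_n) : w *m ctr w = 0 -> w = 0.
Proof.
move=> w0; suff : ctr w = 0 by move/(congr1 (@ctr _ _ _)); rewrite ctrK ctr0.
by apply: ctr_mul_self_eq0; rewrite ctrK w0 mxE.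
Qed.

Lemma herm_mul_sq_eq0 n (L : 'M[C]_n) (w : 'cV[C]_n) :
  ctr L = L -> L *m (L *m w) = 0 -> L *m w = 0.
Proof.
by move=> hL LLw; apply: ctr_mul_self_eq0; rewrite ctrM hL -mulmxA LLw mulmx0 mxE.
Qed.

(* Expand [(x - e A x)^* A (x - e A x) >= 0] for a well chosen real [e > 0]. *)
Lemma psd_form_eq0 n (A : 'M[C]_n) (x : 'cV[C]_n) :
  psd A -> (ctr x *m A *m x) 0 0 = 0 -> A *m x = 0.
Proof.
move=> [hA pA] x0; set y := A *m x.
have xAy : ctr x *m A *m y = ctr y *m y by rewrite /y ctrM hA mulmxA.
have yAx : ctr y *m A *m x = ctr y *m y by rewrite -mulmxA.
set X := ctr x *m A *m x in x0 *; set Y := ctr y *m y; set Z := ctr y *m A *m y.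
set c := Y 0 0; set d := Z 0 0.
have [|c_neq0] := eqVneq c 0; first exact: ctr_mul_self_eq0.
have c_gt0 : 0 < c by rewrite lt_def c_neq0 ctr_mul_self_ge0.
have d1_gt0 : 0 < d + 1 by rewrite ltr_wpDl ?pA.
set e := c / (d + 1).
have e_real : e^* = e by apply: geC0_conj; rewrite divr_ge0 // ltW.
have := pA (x - e *: y).
have -> : ctr (x - e *: y) *m A *m (x - e *: y) =
    X - e *: (ctr x *m A *m y) - e *: (ctr y *m A *m x) + (e * e) *: Z.
  rewrite ctrB ctrZ e_real mulmxBl !mulmxBr -!scalemxAl -!scalemxAr.
  rewrite !mulmxBl -!scalemxAl scalerBr scalerA opprB !addrA.
  by rewrite addrAC (addrAC X).
have entry (M1 M2 M3 M4 : 'M[C]_1) a1 a2 a3 :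
    (M1 - a1 *: M2 - a2 *: M3 + a3 *: M4) 0 0
    = M1 0 0 - a1 * M2 0 0 - a2 * M3 0 0 + a3 * M4 0 0 by rewrite !mxE.
rewrite xAy yAx entry x0 -/c -/d.
have -> : 0 - e * c - e * c + e * e * d = - (c ^+ 2 * (d + 2%:R) / (d + 1) ^+ 2).
  by rewrite /e; field; rewrite lt0r_neq0.
rewrite oppr_ge0 => le0; suff : 0 < c ^+ 2 * (d + 2%:R) / (d + 1) ^+ 2.
  by move/lt_geF; rewrite le0.
by rewrite divr_gt0 ?exprn_gt0 // mulr_gt0 ?exprn_gt0 // ltr_wpDl ?pA.
Qed.

End Positivity.

Section MoorePenrose.
Variable C : numClosedFieldType.

Lemma mulmx_ctr_unit r m (M : 'M[C]_(r, m)) : row_free M -> M *m ctr M \in unitmx.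
Proof.
move=> freeM; rewrite -row_free_unit -kermx_eq0; apply/eqP/row_matrixP => i.
rewrite row0; set v := row i _.
have vMM : v *m (M *m ctr M) = 0 by rewrite /v -row_mul mulmx_ker row0.
apply: (row_free_inj freeM); rewrite mul0mx; apply: mul_ctr_self_eq0.
by rewrite ctrM mulmxA -(mulmxA v) vMM mul0mx.
Qed.

Lemma penrose_factor m n r (F : 'M[C]_(m, r)) (G : 'M[C]_(r, n)) :
  ctr F *m F \in unitmx -> G *m ctr G \in unitmx ->
  penrose (F *m G) (ctr G *m invmx (G *m ctr G) *m invmx (ctr F *m F) *m ctr F).
Proof.
set P := ctr F *m F; set Q := G *m ctr G => uP uQ.
have hP : ctr P = P by rewrite /P ctrM ctrK.
have hQ : ctr Q = Q by rewrite /Q ctrM ctrK.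
have GQ k (M : 'M_(k, r)) : M *m G *m ctr G *m invmx Q = M.
  by rewrite -(mulmxA M G) -mulmxA -/Q mulmxV ?mulmx1.
have PF k (M : 'M_(k, r)) : M *m invmx P *m ctr F *m F = M.
  by rewrite -!mulmxA -/P mulVmx ?mulmx1.
split; rewrite !mulmxA ?GQ ?PF ?GQ //.
- by rewrite !ctrM ctrK ctr_inv hP mulmxA.
- by rewrite !ctrM ctrK ctr_inv hQ mulmxA.
Qed.

Lemma mpinvP m n (A : 'M[C]_(m, n)) : penrose A (mpinv A).
Proof.
apply: epsilon_spec; rewrite -[A]mulmx_base.
have uF : ctr (col_base A) *m ctr (ctr (col_base A)) \in unitmx.
  by apply: mulmx_ctr_unit; rewrite /row_free mxrank_ctr; have := col_base_full A.
rewrite ctrK in uF.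
by eexists; apply: penrose_factor uF (mulmx_ctr_unit (row_base_free A)).
Qed.

End MoorePenrose.

Section Subspaces.
Variable C : numClosedFieldType.

Lemma rangesp_sub m n k (A : 'M[C]_(m, n)) (B : 'M[C]_(m, k)) :
  (forall y : 'cV[C]_m, ctr B *m y = 0 -> ctr A *m y = 0) ->
  (rangesp A <= rangesp B)%MS.
Proof.
move=> kerBA; rewrite /rangesp submxE -(map_mx_eq0 Num.conj).
set K := map_mx Num.conj (cokermx B^T).
have BK : ctr B *m K = 0.
  by rewrite /ctr /K map_trmx -map_mxM mulmx_coker map_mx0.
rewrite map_mxM -map_trmx -/(ctr A); apply/eqP/matrixP => i j.
have : col j (ctr A *m K) = 0.
  by rewrite colE -mulmxA -colE kerBA // colE mulmxA BK mul0mx.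
by move/(congr1 (fun M : 'cV_n => M i 0)); rewrite !mxE.
Qed.

Lemma capmx_sub0 m k l (U : 'M[C]_(k, m)) (W : 'M[C]_(l, m)) :
  (forall v : 'rV[C]_m, (v <= U)%MS -> (v <= W)%MS -> v = 0) ->
  (U :&: W <= (0 : 'M[C]_m))%MS.
Proof.
move=> UW0; rewrite submx0; apply/eqP/row_matrixP => i; rewrite row0.
by apply: UW0; apply: submx_trans (row_sub _ _) _; rewrite ?capmxSl ?capmxSr.
Qed.

Lemma herm_ker_range_decomp n (L : 'M[C]_n) : ctr L = L ->
  forall x : 'cV[C]_n, exists a c, L *m a = 0 /\ x = a + L *m c.
Proof.
move=> hL x.
have cap : (kermx L^T :&: L^T)%MS = 0.
  apply/eqP; rewrite -submx0; apply: capmx_sub0 => v /sub_kermxP vL /submxP [d dv].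
  rewrite dv in vL *.
  have LLd : L *m (L *m d^T) = 0 by apply/eqP; rewrite -trmx_eq0 !trmx_mul trmxK vL.
  by apply/eqP; rewrite -trmx_eq0 trmx_mul trmxK (herm_mul_sq_eq0 hL LLd).
have full : (1%:M <= kermx L^T + L^T)%MS.
  rewrite sub1mx /row_full (mxrank_disjoint_sum cap) mxrank_ker subnK //.
  exact: rank_leq_col.
have /sub_addsmxP [[u1 u2] /= xu] := submx_trans (submx1 x^T) full.
exists (u1 *m kermx L^T)^T, u2^T; split.
  by apply: trmx_inj; rewrite trmx_mul trmxK -mulmxA mulmx_ker mulmx0 trmx0.
by rewrite -[x]trmxK xu linearD /= [X in _ + X]trmx_mul trmxK.
Qed.

End Subspaces.

(* Block vectors of [C^((n+1)q)] are handled through their sequences of blocks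
   [f : nat -> 'cV_q], of which only [f 0, ..., f n] matter. *)
Section BlockVectors.
Variables (C : numClosedFieldType) (q : nat).
Implicit Types (f g : nat -> 'cV[C]_q) (s : nat -> 'M[C]_q).

Definition bvec n f : 'cV[C]_(bs q n.+1) :=
  @mxcol C n.+1 (fun _ => q) 1 (fun j => f j).

Definition bblock n (x : 'cV[C]_(bs q n.+1)) : nat -> 'cV[C]_q :=
  fun j => if (j < n.+1)%N then @submxcol C n.+1 (fun _ => q) 1 x (inord j)
           else 0.

Lemma bblockK n x : bvec n (bblock x) = x.
Proof.
rewrite /bvec -[RHS]submxcolK; apply/eq_mxcol => i.
by rewrite /bblock ltn_ord inord_val.
Qed.

Lemma bvecK n f j : (j <= n)%N -> bblock (bvec n f) j = f j.
Proof. by move=> jn; rewrite /bblock ltnS jn mxcolK inordK. Qed.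

Lemma bblock_out n x j : (n < j)%N -> @bblock n x j = 0.
Proof. by move=> nj; rewrite /bblock ltnS leqNgt nj. Qed.

Lemma eq_bvec n f g : (forall j, (j <= n)%N -> f j = g j) -> bvec n f = bvec n g.
Proof. by move=> fg; apply/eq_mxcol => i; rewrite fg // -ltnS. Qed.

Lemma bvec_inj n f g : bvec n f = bvec n g -> forall j, (j <= n)%N -> f j = g j.
Proof. by move=> fg j jn; rewrite -(bvecK f jn) fg bvecK. Qed.

Lemma bvec0 n : bvec n (fun _ => 0) = 0.
Proof. by rewrite /bvec mxcol0. Qed.

Lemma bvec_eq0 n f : bvec n f = 0 -> forall j, (j <= n)%N -> f j = 0.
Proof. by rewrite -(bvec0 n); apply: bvec_inj. Qed.

Lemma bvecD n f g : bvec n (fun j => f j + g j) = bvec n f + bvec n g.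
Proof. by rewrite /bvec mxcolD. Qed.

Lemma bvecN n f : bvec n (fun j => - f j) = - bvec n f.
Proof. by rewrite /bvec mxcolN. Qed.

Lemma ctr_bvec_mul n f g :
  ctr (bvec n f) *m bvec n g = \sum_(0 <= a < n.+1) ctr (f a) *m g a.
Proof. by rewrite /bvec ctr_mxcol mul_mxrow_mxcol big_mkord. Qed.

Lemma Ldiag_bvec s n f :
  Ldiag s n *m bvec n f = bvec n (fun j => Lschur s j *m f j).
Proof. by rewrite /Ldiag /bvec mul_mxdiag_mxcol. Qed.

Lemma Ldiag_ker (t : nat -> 'M[C]_q) n (y : 'cV[C]_(bs q n.+1)) :
  Ldiag t n *m y = 0 -> forall j, (j <= n)%N -> Lschur t j *m bblock y j = 0.
Proof. by rewrite -{1}(bblockK y) Ldiag_bvec => /bvec_eq0. Qed.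

Lemma mul_shift_bvec p r (g : nat -> 'cV[C]_q) : (p <= r.+1)%N ->
  @mxblock C p.+1 r.+1 (fun _ => q) (fun _ => q)
    (fun j k => if val j == (val k).+1 then 1%:M else 0) *m bvec r g =
  bvec p (fun j => if j is j'.+1 then g j' else 0).
Proof.
move=> pr; rewrite /bvec mul_mxblock_mxrow; apply/eq_mxcol => -[[|i] ip] /=.
  by rewrite big1 // => k _; rewrite mul0mx.
have ir : (i < r.+1)%N by lia.
rewrite (bigD1 (Ordinal ir)) //= eqxx mul1mx big1 ?addr0 // => k.
by rewrite eqSS eq_sym -val_eqE => /negPf ->; rewrite mul0mx.
Qed.

Lemma mul_trunc_bvec p r (g : nat -> 'cV[C]_q) : (p <= r)%N ->
  @mxblock C p.+1 r.+1 (fun _ => q) (fun _ => q)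
    (fun j k => if val k == val j then 1%:M else 0) *m bvec r g = bvec p g.
Proof.
move=> pr; rewrite /bvec mul_mxblock_mxrow; apply/eq_mxcol => i.
have ir : (i < r.+1)%N by rewrite (leq_trans (ltn_ord i)).
rewrite (bigD1 (Ordinal ir)) //= eqxx mul1mx big1 ?addr0 // => k.
by rewrite -val_eqE => /negPf ->; rewrite mul0mx.
Qed.

Lemma ctr_Vmx n : ctr (Vmx C q n) = @mxblock C n n.+1 (fun _ => q) (fun _ => q)
    (fun j k => if val k == val j then 1%:M else 0).
Proof.
rewrite /Vmx ctr_mxblock; apply/eq_mxblock => i j.
by case: eqP; rewrite ?ctr1 ?ctr0.
Qed.

(* Block row [a] of [H_n f]; defined for every [a], so that the rows of a
   larger Hankel matrix applied to a padded vector can be expressed. *)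
Definition hmul s n f (a : nat) : 'cV[C]_q :=
  \sum_(0 <= b < n.+1) s (a + b)%N *m f b.

Lemma Hank_bvec s n f : Hank s n *m bvec n f = bvec n (hmul s n f).
Proof.
rewrite /Hank /bvec mul_mxblock_mxrow; apply/eq_mxcol => i.
by rewrite /hmul big_mkord.
Qed.

Lemma eq_hmul s n f g a : (forall b, (b <= n)%N -> f b = g b) ->
  hmul s n f a = hmul s n g a.
Proof.
move=> fg; rewrite /hmul big_nat_cond [RHS]big_nat_cond.
by apply: eq_bigr => b /andP[/andP[_ bn] _]; rewrite fg.
Qed.

Lemma hmul_trunc s N j f a : (j <= N)%N -> (forall b, (j < b)%N -> f b = 0) ->
  hmul s N f a = hmul s j f a.
Proof.
move=> jN f0; rewrite /hmul (big_cat_nat _ (n := j.+1)) //= [X in _ + X]big1_seq.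
  by rewrite addr0.
by move=> b /andP[_]; rewrite mem_index_iota => /andP[jb _]; rewrite f0 // mulmx0.
Qed.

Lemma hmulD s n f g a :
  hmul s n (fun b => f b + g b) a = hmul s n f a + hmul s n g a.
Proof. by rewrite /hmul -big_split; apply: eq_bigr => b _; rewrite mulmxDr. Qed.

Lemma hmulZ s n c f a : hmul s n (fun b => c *: f b) a = c *: hmul s n f a.
Proof. by rewrite /hmul scaler_sumr; apply: eq_bigr => b _; rewrite scalemxAr. Qed.

Lemma hmulSn s n f a : hmul s n.+1 f a = hmul s n f a + s (a + n.+1)%N *m f n.+1.
Proof. by rewrite /hmul big_nat_recr. Qed.

Lemma hmul_shiftr s n f a :
  hmul s n.+1 (fun b => if b is b'.+1 then f b' else 0) a = hmul s n f a.+1.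
Proof.
rewrite /hmul big_nat_recl // mulmx0 add0r.
by apply: eq_bigr => b _; rewrite addSnnS.
Qed.

Lemma hmul_sshift alpha s n f a :
  hmul (sshift alpha s) n f a = hmul s n f a.+1 - alpha *: hmul s n f a.
Proof.
rewrite /hmul /sshift scaler_sumr -sumrB; apply: eq_bigr => b _.
by rewrite mulmxDl addrC -scalemxAl addSn scaleNr.
Qed.

End BlockVectors.

Section PsdHankel.
Variables (C : numClosedFieldType) (q : nat) (s : nat -> 'M[C]_q) (N : nat).
Hypothesis psdH : psd (Hank s N).
Implicit Types (f : nat -> 'cV[C]_q).

Lemma psd_Hank_herm k : (k <= N.*2)%N -> ctr (s k) = s k.
Proof.
move=> kN; have [+ _] := psdH; rewrite /Hank ctr_mxblock => /eq_mxblockP Hh.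
have i_lt : (minn k N < N.+1)%N by lia.
have j_lt : (k - minn k N < N.+1)%N by lia.
have := Hh (Ordinal i_lt) (Ordinal j_lt); rewrite /=.
have -> : (k - minn k N + minn k N = k)%N by lia.
by have -> : (minn k N + (k - minn k N) = k)%N by lia.
Qed.

Lemma Hank_herm m : (m <= N)%N -> ctr (Hank s m) = Hank s m.
Proof.
move=> mN; rewrite /Hank ctr_mxblock; apply/eq_mxblock => i j.
rewrite addnC psd_Hank_herm //; have := ltn_ord i; have := ltn_ord j; lia.
Qed.

(* [x^* H_N x = 0] for the padded vector [x], so [H_N x = 0] by positivity. *)
Lemma psd_Hank_ker_pad m f : (m <= N)%N -> (forall b, (m < b)%N -> f b = 0) ->
  (forall a, (a <= m)%N -> hmul s m f a = 0) ->
  forall a, (a <= N)%N -> hmul s m f a = 0.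
Proof.
move=> mN f0 Hf; have trunc a := hmul_trunc s a mN f0.
have HNf : Hank s N *m bvec N f = 0.
  apply: psd_form_eq0 => //; rewrite -mulmxA Hank_bvec ctr_bvec_mul.
  rewrite big_nat_cond big1 ?mxE // => a /andP[/andP[_ aN] _].
  case: (leqP a m) => am; first by rewrite trunc Hf ?mulmx0.
  by rewrite f0 // ctr0 mul0mx.
by move=> a aN; rewrite -trunc; move: HNf; rewrite Hank_bvec => /bvec_eq0; apply.
Qed.

End PsdHankel.

Section SchurComplement.
Variables (C : numClosedFieldType) (q : nat) (s : nat -> 'M[C]_q) (N : nat).
Hypothesis psdH : psd (Hank s N).
Implicit Types (f : nat -> 'cV[C]_q).

Definition hcol m : 'M[C]_(bs q m.+1, q) :=
  @mxcol C m.+1 (fun _ => q) q (fun i => s (m.+1 + i)%N).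
Definition hrow m : 'M[C]_(q, bs q m.+1) :=
  @mxrow C m.+1 (fun _ => q) q (fun i => s (m.+1 + i)%N).

Lemma LschurS m :
  Lschur s m.+1 = s (m.+1).*2 - hrow m *m mpinv (Hank s m) *m hcol m.
Proof. by []. Qed.

Lemma ctr_hcol m : (m < N)%N -> ctr (hcol m) = hrow m.
Proof.
move=> mN; rewrite /hcol ctr_mxcol; apply/eq_mxrow => i.
rewrite (psd_Hank_herm psdH) //; have := ltn_ord i; lia.
Qed.

Lemma hrow_bvec m f : hrow m *m bvec m f = hmul s m f m.+1.
Proof. by rewrite /hrow /bvec /hmul mul_mxrow_mxcol big_mkord. Qed.

Lemma hcol_mul m u : hcol m *m u = bvec m (fun a => s (m.+1 + a)%N *m u).
Proof. by rewrite /hcol /bvec mxcol_mul. Qed.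

Lemma hcol_range m : (m < N)%N -> exists Z, hcol m = Hank s m *m Z.
Proof.
move=> mN; suff /submxP [D HD] : (rangesp (hcol m) <= rangesp (Hank s m))%MS.
  by exists D^T; rewrite -[hcol m]trmxK -[(hcol m)^T]/(rangesp _) HD trmx_mul trmxK.
apply: rangesp_sub => y; rewrite (Hank_herm psdH (ltnW mN)) (ctr_hcol mN).
rewrite -(bblockK y) Hank_bvec hrow_bvec => /bvec_eq0 Hy.
exact (psd_Hank_ker_pad psdH (ltnW mN) (@bblock_out _ _ _ y) Hy mN).
Qed.

Lemma Lschur_factor m : (m < N)%N -> exists Z : 'M[C]_(bs q m.+1, q),
  [/\ hcol m = Hank s m *m Z, hrow m = ctr Z *m Hank s m
    & Lschur s m.+1 = s (m.+1).*2 - hrow m *m Z].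
Proof.
move=> mN; have [Z HZ] := hcol_range mN; exists Z.
have [HXH _ _ _] := mpinvP (Hank s m).
have RZ : hrow m = ctr Z *m Hank s m.
  by rewrite -ctr_hcol // HZ ctrM (Hank_herm psdH) // ltnW.
split => //; rewrite LschurS HZ {1}RZ !mulmxA.
by rewrite -(mulmxA (ctr Z) (Hank s m)) -(mulmxA (ctr Z)) HXH -RZ.
Qed.

Lemma Lschur_herm j : (j <= N)%N -> ctr (Lschur s j) = Lschur s j.
Proof.
case: j => [|m] jN; first exact: (psd_Hank_herm psdH).
have [Z [HZ RZ ->]] := Lschur_factor jN.
rewrite ctrB ctrM (psd_Hank_herm psdH); last by lia.
by rewrite -[in ctr (hrow m)](ctr_hcol jN) ctrK HZ mulmxA -RZ.
Qed.

Lemma Lschur_ker_last j f : (j <= N)%N ->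
  (forall a, (a <= j)%N -> hmul s j f a = 0) -> Lschur s j *m f j = 0.
Proof.
case: j => [|m] jN Hf; first by have := Hf 0%N isT; rewrite /hmul big_nat1.
have [Z [HZ RZ ->]] := Lschur_factor jN.
set z := bvec m f; set u := f m.+1.
have Yu : hcol m *m u = - (Hank s m *m z).
  apply/eqP; rewrite -addr_eq0; apply/eqP.
  rewrite /z Hank_bvec hcol_mul -bvecD -(bvec0 C q m); apply: eq_bvec => a am.
  by have := Hf a (leqW am); rewrite hmulSn addnC addrC.
have Ru : hrow m *m z + s (m.+1).*2 *m u = 0.
  by have := Hf m.+1 (leqnn _); rewrite hmulSn -addnn /z hrow_bvec.
rewrite mulmxBl RZ -!mulmxA (mulmxA (Hank s m)) -HZ Yu mulmxN mulmxA -RZ opprK.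
by rewrite addrC.
Qed.

Lemma Lschur_ker_lift j u : (j <= N)%N -> Lschur s j *m u = 0 ->
  exists f, [/\ forall b, (j < b)%N -> f b = 0, f j = u &
              forall a, (a <= j)%N -> hmul s j f a = 0].
Proof.
case: j => [|m] jN Lu.
  exists (fun b => if b == 0%N then u else 0); split => [[]|//|a] //.
  by rewrite leqn0 => /eqP ->; rewrite /hmul big_nat1.
have [Z [HZ RZ LZ]] := Lschur_factor jN.
set w := - (Z *m u).
exists (fun b => if b == m.+1 then u else bblock w b); split => [b mb||a am].
- by rewrite (gtn_eqF mb) bblock_out // ltnW.
- by rewrite eqxx.
rewrite hmulSn eqxx (eq_hmul _ (g := bblock w)); last first.
  by move=> b bm; rewrite ifN // neq_ltn ltnS bm.
have Hw : bvec m (hmul s m (bblock w))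
         = bvec m (fun a => - (s (m.+1 + a)%N *m u)).
  by rewrite -Hank_bvec bblockK /w mulmxN mulmxA -HZ hcol_mul bvecN.
case: (ltngtP a m.+1) => [am1|ma|->].
- by rewrite (bvec_inj Hw) // addnC addNr.
- by move: am; rewrite leqNgt ma.
- by rewrite -hrow_bvec bblockK /w mulmxN mulmxA addnn addrC -mulmxBl -LZ.
Qed.

End SchurComplement.

Section DirectSum.
Variables (C : numClosedFieldType) (q : nat) (s : nat -> 'M[C]_q) (N : nat).
Hypothesis psdH : psd (Hank s N).
Implicit Types (f k w : nat -> 'cV[C]_q).

Lemma Ldiag_herm n : (n <= N)%N -> ctr (Ldiag s n) = Ldiag s n.
Proof.
move=> nN; rewrite /Ldiag ctr_mxdiag; apply/eq_mxdiag => i.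
by rewrite (Lschur_herm psdH) // (leq_trans _ nN) // -ltnS.
Qed.

Lemma Hank_Ldiag_eq0 n w : (n <= N)%N ->
  (forall a, (a <= n)%N -> hmul s n (fun b => Lschur s b *m w b) a = 0) ->
  forall b, (b <= n)%N -> Lschur s b *m w b = 0.
Proof.
elim: n => [|n IH] nN Hw b bn.
all: have Ln := herm_mul_sq_eq0 (Lschur_herm psdH nN) (Lschur_ker_last psdH nN Hw).
  by move: bn; rewrite leqn0 => /eqP ->.
move: bn; rewrite leq_eqVlt => /orP[/eqP -> //| bn].
apply: IH (ltnW nN) _ _ bn => a an.
by have := Hw a (leqW an); rewrite hmulSn Ln mulmx0 addr0.
Qed.

Lemma Hank_ker_Ldiag_decomp n x : (n <= N)%N -> exists k w,
  [/\ forall b, (n < b)%N -> k b = 0, forall a, (a <= n)%N -> hmul s n k a = 0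
    & forall b, (b <= n)%N -> x b = k b + Lschur s b *m w b].
Proof.
elim: n x => [|n IH] x nN.
  have [a [c [La xa]]] := herm_ker_range_decomp (Lschur_herm psdH nN) (x 0%N).
  have [f [f0 fa Hf]] := Lschur_ker_lift psdH nN La.
  exists f, (fun _ => c); split=> // b.
  by rewrite leqn0 => /eqP ->; rewrite fa.
have [a [c [La xn]]] := herm_ker_range_decomp (Lschur_herm psdH nN) (x n.+1).
have [f [f0 fn Hf]] := Lschur_ker_lift psdH nN La.
have [k [w [k0 Hk xkw]]] := IH (fun b => x b - f b) (ltnW nN).
have Hk' := psd_Hank_ker_pad psdH (ltnW nN) k0 Hk.
exists (fun b => f b + k b), (fun b => if (b <= n)%N then w b else c).
split=> [b nb|i ni|b].
- by rewrite f0 ?k0 ?addr0 // ltnW.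
- rewrite hmulD Hf // add0r (hmul_trunc _ _ (leqnSn n) k0).
  by rewrite Hk' // (leq_trans ni).
rewrite leq_eqVlt => /orP[/eqP ->|bn]; first by rewrite ltnn k0 // addr0 fn.
by rewrite ltnS in bn; rewrite bn -addrA -xkw // addrC subrK.
Qed.

Lemma dsum_full_nullsp_Dsp n : (n <= N)%N ->
  dsum_full (nullsp (Hank s n)) (Dsp s n).
Proof.
move=> nN; split.
  apply: capmx_sub0 => v /sub_kermxP Hv /submxP [d vd].
  have vL : v^T = bvec n (fun b => Lschur s b *m bblock d^T b).
    by rewrite vd trmx_mul trmxK -Ldiag_bvec bblockK.
  have : Hank s n *m v^T = 0 by rewrite -[Hank s n]trmxK -trmx_mul Hv trmx0.
  rewrite vL Hank_bvec => /bvec_eq0/(Hank_Ldiag_eq0 nN) Lw0.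
  by apply: trmx_inj; rewrite vL trmx0 -(bvec0 C q n); apply: eq_bvec.
apply/row_subP => i; set v := row i _.
have [k [w [_ Hk vkw]]] := Hank_ker_Ldiag_decomp (bblock v^T) nN.
have -> : v = (bvec n k)^T + (bvec n w)^T *m (Ldiag s n)^T.
  apply: trmx_inj; rewrite linearD /= trmx_mul !trmxK Ldiag_bvec -bvecD.
  by rewrite -[LHS]bblockK; apply: eq_bvec.
apply: addmx_sub_adds; last exact: submxMl.
apply/sub_kermxP; rewrite -trmx_mul Hank_bvec (eq_bvec (g := fun _ => 0) Hk).
by rewrite bvec0 trmx0.
Qed.

End DirectSum.

Section Shift.
Variables (C : numClosedFieldType) (q : nat) (alpha : C) (s : nat -> 'M[C]_q).
Variables (N N' : nat).
Hypotheses (psdH : psd (Hank s N)) (psdHa : psd (Hank (sshift alpha s) N')).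

(* Padded, a kernel vector of [H_j] is one of [H_N], so its block rows
   [0, ..., j + 1] vanish. *)
Lemma Lschur_ker_sshift j (u : 'cV[C]_q) : (j < N)%N -> (j <= N')%N ->
  Lschur s j *m u = 0 -> Lschur (sshift alpha s) j *m u = 0.
Proof.
move=> jN jN' Lu; have [f [f0 <- Hf]] := Lschur_ker_lift psdH (ltnW jN) Lu.
have Hf' := psd_Hank_ker_pad psdH (ltnW jN) f0 Hf.
apply: (Lschur_ker_last psdHa jN') => a aj.
by rewrite hmul_sshift !Hf' ?scaler0 ?subr0 //; lia.
Qed.

(* If [f] is a kernel vector of [H_(alpha > j)], then [g_b = f_(b-1) - alpha f_b]
   is one of [H_(j+1)] with the same last block. *)
Lemma Lschur_sshift_kerS j (u : 'cV[C]_q) : (j < N)%N -> (j < N')%N ->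
  Lschur (sshift alpha s) j *m u = 0 -> Lschur s j.+1 *m u = 0.
Proof.
move=> jN jN' Lu; have [f [f0 fj Hf]] := Lschur_ker_lift psdHa (ltnW jN') Lu.
have Hf' := psd_Hank_ker_pad psdHa (ltnW jN') f0 Hf.
pose g b := (if b is b'.+1 then f b' else 0) + - alpha *: f b.
have -> : u = g j.+1 by rewrite /g (f0 j.+1) // scaler0 addr0.
apply: (Lschur_ker_last psdH jN) => a aj.
rewrite hmulD hmulZ hmul_shiftr (hmul_trunc s a (leqnSn j) f0) scaleNr.
by rewrite -hmul_sshift Hf' //; lia.
Qed.

Lemma Dsp_sshift_sub n : (n < N)%N -> (n <= N')%N ->
  (Dsp (sshift alpha s) n <= Dsp s n)%MS.
Proof.
move=> nN nN'; apply: rangesp_sub => y.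
rewrite (Ldiag_herm psdH (ltnW nN)) => /Ldiag_ker Ly.
rewrite (Ldiag_herm psdHa) // -(bblockK y) Ldiag_bvec -(bvec0 C q n).
apply: eq_bvec => j jn.
by apply: Lschur_ker_sshift; try lia; exact: Ly.
Qed.

Lemma Tmx_Dsp_sub n : (n <= N)%N -> (n <= N')%N ->
  (imgsp (ctr (Tmx C q n)) (Dsp s n) <= Dsp (sshift alpha s) n)%MS.
Proof.
move=> nN nN'; rewrite /imgsp /Dsp /rangesp -trmx_mul; apply: rangesp_sub => y.
rewrite (Ldiag_herm psdHa) // => /Ldiag_ker Ly.
rewrite ctrM ctrK (Ldiag_herm psdH) // -mulmxA -(bblockK y) mul_shift_bvec //.
rewrite Ldiag_bvec -(bvec0 C q n).
apply: eq_bvec => -[|j] jn; first by rewrite mulmx0.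
by apply: Lschur_sshift_kerS; try lia; exact: Ly (ltnW jn).
Qed.

Lemma fVmx_Dsp_sub m : (m < N)%N -> (m < N')%N ->
  (imgsp (ctr (fVmx C q m.+1)) (Dsp s m.+1) <= Dsp (sshift alpha s) m)%MS.
Proof.
move=> mN mN'; rewrite /imgsp /Dsp /rangesp -trmx_mul; apply: rangesp_sub => y.
rewrite (Ldiag_herm psdHa (ltnW mN')) => /Ldiag_ker Ly.
rewrite ctrM ctrK (Ldiag_herm psdH) // -mulmxA -(bblockK y) mul_shift_bvec //.
rewrite Ldiag_bvec -(bvec0 C q m.+1).
apply: eq_bvec => -[|j] jn; first by rewrite mulmx0.
by apply: Lschur_sshift_kerS; try lia; exact: Ly.
Qed.

Lemma Vmx_Dsp_sub m : (m < N)%N -> (m < N')%N ->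
  (imgsp (Vmx C q m.+1) (Dsp (sshift alpha s) m) <= Dsp s m.+1)%MS.
Proof.
move=> mN mN'; rewrite /imgsp /Dsp /rangesp -trmx_mul; apply: rangesp_sub => y.
rewrite (Ldiag_herm psdH) // => /Ldiag_ker Ly.
rewrite ctrM (Ldiag_herm psdHa (ltnW mN')) -mulmxA ctr_Vmx -(bblockK y).
rewrite mul_trunc_bvec // Ldiag_bvec -(bvec0 C q m); apply: eq_bvec => j jm.
by apply: Lschur_ker_sshift; try lia; apply: Ly; lia.
Qed.

End Shift.

Section Truncation.
Variables (C : numClosedFieldType) (q : nat).
Implicit Types (s t : nat -> 'M[C]_q).

Lemma eq_Hank s t n : (forall k, (k <= n.*2)%N -> s k = t k) ->
  Hank s n = Hank t n.
Proof.
move=> st; apply/eq_mxblock => i j; apply: st.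
have := ltn_ord i; have := ltn_ord j; lia.
Qed.

Lemma eq_Lschur s t j : (forall k, (k <= j.*2)%N -> s k = t k) ->
  Lschur s j = Lschur t j.
Proof.
case: j => [|m] st; first exact: st.
rewrite !LschurS (@eq_Hank s t m) => [|k km]; last by apply: st; lia.
have -> : hrow s m = hrow t m.
  by apply/eq_mxrow => i; apply: st; have := ltn_ord i; lia.
have -> : hcol s m = hcol t m.
  by apply/eq_mxcol => i; apply: st; have := ltn_ord i; lia.
by rewrite st.
Qed.

Lemma eq_Dsp s t n : (forall k, (k <= n.*2)%N -> s k = t k) ->
  Dsp s n = Dsp t n.
Proof.
move=> st; rewrite /Dsp /Ldiag; congr rangesp; apply/eq_mxdiag => i.
apply: eq_Lschur => k ki; apply: st; have := ltn_ord i; lia.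
Qed.

Lemma eq_sshift (alpha : C) s t M : (forall k, (k <= M.+1)%N -> s k = t k) ->
  forall k, (k <= M)%N -> sshift alpha s k = sshift alpha t k.
Proof. by move=> st k kM; rewrite /sshift !st // ltnW. Qed.

Lemma KgeS_psd (alpha : C) s L : Kge alpha s L.+1 ->
  psd (Hank s (L.+1)./2) /\ psd (Hank (sshift alpha s) L./2).
Proof. by rewrite /Kge /=; case oddL: (odd L); rewrite /= uphalf_half oddL. Qed.

Lemma Kge_e_psd (alpha : C) kappa s M : Kge_e alpha kappa s -> le_kappa M kappa ->
  exists t N N', [/\ forall k, (k <= M)%N -> s k = t k,
    ((M.+1)./2 <= N)%N, (M./2 <= N')%N,
    psd (Hank t N) & psd (Hank (sshift alpha t) N')].
Proof.
case: kappa => [K [r /KgeS_psd [psdT psdTa]] /= MK|sK _]; last first.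
  by exists s, (M.+1)./2, M./2; have [] := KgeS_psd (sK M.+1).
exists (fun j => if j == K.+1 then r else s j), (K.+1)./2, K./2.
split=> //.
- by move=> k kM; rewrite ifN //; apply/eqP; lia.
- exact: (half_leq (MK : (M.+1 <= K.+1)%N)).
- exact: half_leq.
Qed.

End Truncation.

Unset Implicit Arguments.

Theorem proposition8p7 (C : numClosedFieldType) (q : nat) (alpha : C)
    (kappa : option nat) (s : nat -> 'M[C]_q) :
  alpha \is Num.real ->
  Kge_e alpha kappa s ->
  (forall n : nat, le_kappa (n.*2.+1) kappa ->
     [/\ (imgsp (ctr (Tmx C q n)) (Dsp s n) <= Dsp (sshift alpha s) n)%MS,
         (Dsp (sshift alpha s) n <= Dsp s n)%MS,
         dsum_full (nullsp (Hank s n)) (Dsp s n)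
       & dsum_full (nullsp (Hank (sshift alpha s) n)) (Dsp (sshift alpha s) n)])
  /\
  (forall m : nat, le_kappa (m.+1).*2 kappa ->
     (* n = m+1 >= 1, n-1 = m *)
     [/\ (imgsp (ctr (fVmx C q m.+1)) (Dsp s m.+1) <= Dsp (sshift alpha s) m)%MS,
         (imgsp (Vmx C q m.+1) (Dsp (sshift alpha s) m) <= Dsp s m.+1)%MS,
         dsum_full (nullsp (Hank s m.+1)) (Dsp s m.+1)
       & dsum_full (nullsp (Hank (sshift alpha s) m)) (Dsp (sshift alpha s) m)]).
Proof.
move=> _ sK; split=> [n | m] /(Kge_e_psd sK) [t [N [N' [st +]]]].
- rewrite -doubleS doubleK -uphalfE uphalf_double => nN nN' psdT psdTa.
  have sta := eq_sshift alpha (M := n.*2) st.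
  have {}st k (kn : (k <= n.*2)%N) := st k (leqW kn).
  rewrite (eq_Dsp st) (eq_Dsp sta) (eq_Hank st) (eq_Hank sta).
  split.
  + exact (Tmx_Dsp_sub psdT psdTa (ltnW nN) nN').
  + exact (Dsp_sshift_sub psdT psdTa nN nN').
  + exact (dsum_full_nullsp_Dsp psdT (ltnW nN)).
  + exact (dsum_full_nullsp_Dsp psdTa nN').
- rewrite -uphalfE uphalf_double doubleK => mN mN' psdT psdTa.
  have sta := eq_sshift alpha (M := m.*2) (fun k km => st k (leqW km)).
  rewrite (eq_Dsp st) (eq_Dsp sta) (eq_Hank st) (eq_Hank sta).
  split.
  + exact (fVmx_Dsp_sub psdT psdTa mN mN').
  + exact (Vmx_Dsp_sub psdT psdTa mN mN').
  + exact (dsum_full_nullsp_Dsp psdT mN).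
  + exact (dsum_full_nullsp_Dsp psdTa (ltnW mN')).
Qed.
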